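(* Let $d \geq 2$, $n$, $k$ and $j$ be positive integers with $k \leq n$, and suppose that either ($n \geq 2k$ and $j < k$) or ($n < 2k$ and $j < n-k$). Then there exist a point set $P \subseteq [0,1]^d$ with $|P| = n$ and a subset $S \subseteq P$ with $|S| = k$ such that $S$ is a local minimum of the $k$-SDSSP-$j$ problem on $P$ (i.e., no $j$-swap applied to $S$ yields a $k$-subset of $P$ with strictly smaller $L_\infty$ star discrepancy), but $S$ is not a global minimum (i.e., there is a subset $S' \subseteq P$ with $|S'| = k$ and $d_\infty^*(S') < d_\infty^*(S)$).
   Context: For a finite point set $Q \subseteq [0,1]^d$, its $L_\infty$ star discrepancy is $d_\infty^*(Q) := \sup_{q \in [0,1]^d} \left| \frac{|Q \cap [0,q)|}{|Q|} - \lambda([0,q)) \right|$, where $[0,q) = [0,q_1) \times \cdots \times [0,q_d)$ and $\lambda$ denotes Lebesgue measure. Given a point set $P \subseteq [0,1]^d$ with $|P| = n$ and a subset $S \subseteq P$ with $|S| = k$, a $j$-swap replaces $S$ by $(S \setminus A) \cup B$ where $A \subseteq S$ and $B \subseteq P \setminus S$ with $|A| = |B| = j$ (i.e., $j$ points of $S$ are simultaneously replaced by $j$ points of $P$ not in $S$). The $k$-SDSSP-$j$ problem is the problem of obtaining a subset of $P$ of size $k$ of minimal $L_\infty$ star discrepancy by only performing improving $j$-swaps (swaps that strictly decrease the star discrepancy); a local minimum of this problem is a $k$-subset from which no $j$-swap strictly decreases the star discrepancy, and a global minimum is a $k$-subset whose star discrepancy is minimal among all $k$-subsets of $P$. *)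

From HB Require Import structures.
From mathcomp Require Import all_boot all_order all_algebra.
From mathcomp Require Import boolp classical_sets reals.
Set Implicit Arguments. Unset Strict Implicit. Unset Printing Implicit Defensive.
Import Order.TTheory GRing.Theory Num.Theory.
Local Open Scope ring_scope.
Local Open Scope classical_set_scope.

Definition in_unit_cube (R : realType) (d : nat) (q : 'I_d -> R) : Prop :=
  forall i : 'I_d, 0 <= q i <= 1.

Definition in_box (R : realType) (d : nat) (x q : 'I_d -> R) : bool :=
  [forall i : 'I_d, (0 <= x i) && (x i < q i)].

Definition box_vol (R : realType) (d : nat) (q : 'I_d -> R) : R :=
  \prod_(i < d) q i.

(* A point set of size n is an injective family P : 'I_n -> [0,1]^d;
   a subset of it is given by a set of indices S : {set 'I_n}.
   L_infty star discrepancy of the point set {P i | i in S}. *)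
Definition star_disc (R : realType) (d n : nat) (P : 'I_n -> 'I_d -> R)
  (S : {set 'I_n}) : R :=
  sup [set e | exists q : 'I_d -> R, in_unit_cube q /\
        e = `| (#|[set i in S | in_box (P i) q]|%:R / #|S|%:R) - box_vol q |].

Definition is_j_swap (n j : nat) (S S' : {set 'I_n}) : Prop :=
  exists (A B : {set 'I_n}), [/\ A \subset S, B \subset ~: S,
     #|A| = j, #|B| = j & S' = (S :\: A) :|: B].

Definition local_min_SDSSP (R : realType) (d n j : nat)
  (P : 'I_n -> 'I_d -> R) (S : {set 'I_n}) : Prop :=
  forall S' : {set 'I_n}, is_j_swap j S S' -> ~ (star_disc P S' < star_disc P S).

Definition global_min_SDSSP (R : realType) (d n k : nat)
  (P : 'I_n -> 'I_d -> R) (S : {set 'I_n}) : Prop :=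
  forall S' : {set 'I_n}, #|S'| = k -> star_disc P S <= star_disc P S'.

From mathcomp Require Import all_boot all_order all_algebra reals.
From mathcomp Require Import lra zify.
Import Order.TTheory GRing.Theory Num.Theory.
Set Implicit Arguments. Unset Strict Implicit.

(* Take points whose coordinates are powers of some rho < 1 close to 1.  In the
   first two coordinates, points 0..N are the corners of a "good" staircase
   {(rho^(N+1-t), rho^(t+1))} and points N+1..2N those of a "bad" one
   {(rho^(N-t), rho^(t+1))}; all other coordinates are rho^(N+1).  A box
   avoiding the corners of a staircase of height K has volume at most rho^K,
   and a box containing a point has volume close to 1, so a k-set containing
   such a staircase has discrepancy at most rho^K.  Conversely, each good
   corner g is the only point in a box of volume rho^N, so every k-set missing
   a good corner has discrepancy at least rho^N.  The set S of points
   N+1..N+k contains the bad staircase and no good corner; a j-swap with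
   j <= N cannot add all N+1 good corners, so S is a local minimum of value
   rho^N, whereas the points 0..k-1 contain the whole good staircase and reach
   rho^(N+1).  Choosing N = min(k, n-k) - 1 satisfies j <= N < k and
   N + k < n. *)

Lemma card_ord_range n a b : b <= n -> #|[set i : 'I_n | a <= i < b]| = b - a.
Proof.
move=> hb; rewrite -sum1_card.
under eq_bigl => i do rewrite inE.
rewrite -(big_ord_widen_cond _ (fun i => a <= i) (fun=> 1)) //.
by rewrite -[RHS]muln1 -sum_nat_const_nat big_geq_mkord.
Qed.

Lemma card_ord_lt n b : b <= n -> #|[set i : 'I_n | i < b]| = b.
Proof.
move=> bn; rewrite -[RHS]subn0 -(card_ord_range 0 bn).
by apply: eq_card => i; rewrite !inE.
Qed.

Lemma j_swap_avoids n j (G S S' : {set 'I_n}) :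
  [disjoint G & S] -> (j < #|G|)%N -> is_j_swap j S S' ->
  exists2 g, g \in G & g \notin S'.
Proof.
move=> hGS hjG [A [B [hA _ _ hBj ->]]].
apply/exists_inP; rewrite -negb_forall_in; apply: contraTN hjG => /forall_inP hG.
rewrite -leqNgt -hBj; apply/subset_leq_card/subsetP => g hg.
have := hG g hg; rewrite inE => /orP[/setDP[hgS _]|//].
by rewrite (disjointFr hGS hg) in hgS.
Qed.

(* Point i is (rho^xexp, rho^yexp, rho^(N+1), ..., rho^(N+1)); points past 2N
   have first coordinate 1 and so lie in no box [0,q) of the unit cube. *)
Definition xexp (N i : nat) : nat :=
  if i <= N then N.+1 - i else if i <= N.*2 then N.*2.+1 - i else 0.

Definition yexp (N i : nat) : nat :=
  if i <= N then i.+1 else if i <= N.*2 then i - N else i.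

Local Ltac exp_cases := rewrite /xexp /yexp; repeat case: ifP => ? /=; lia.

Lemma xexp_le N i : xexp N i <= N.+1.
Proof. exp_cases. Qed.

Lemma yexp_le N i : xexp N i != 0 -> yexp N i <= N.+1.
Proof. exp_cases. Qed.

Lemma exp_inj N i i' : xexp N i = xexp N i' -> yexp N i = yexp N i' -> i = i'.
Proof. exp_cases. Qed.

Lemma exp_probe N g i : g <= N -> N - g < xexp N i -> g < yexp N i -> i = g.
Proof. exp_cases. Qed.

Lemma exp_good N t : t <= N -> xexp N t = N.+1 - t /\ yexp N t = t.+1.
Proof. exp_cases. Qed.

Lemma exp_bad N t : t < N -> xexp N (N.+1 + t) = N - t /\ yexp N (N.+1 + t) = t.+1.
Proof. exp_cases. Qed.

Definition contains_staircase n N (X : {set 'I_n}) (K : nat) : Prop :=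
  forall t, t < K -> exists2 i, i \in X & xexp N i = K - t /\ yexp N i = t.+1.

Lemma contains_staircase_bad n N (X : {set 'I_n}) : N.*2 < n ->
  [set i : 'I_n | N < i <= N.*2] \subset X -> contains_staircase N X N.
Proof.
move=> Nn /subsetP NX t tN.
have tn : N.+1 + t < n by lia.
exists (Ordinal tn); last exact: exp_bad.
by apply: NX; rewrite inE /=; lia.
Qed.

Lemma contains_staircase_good n N (X : {set 'I_n}) : N < n ->
  [set i : 'I_n | i <= N] \subset X -> contains_staircase N X N.+1.
Proof.
move=> Nn /subsetP NX t tN.
have tn : t < n by lia.
exists (Ordinal tn); last by apply: exp_good.
by apply: NX; rewrite inE /=.
Qed.

Local Open Scope ring_scope.

Lemma bernoulli_sub (R : realDomainType) (x : R) n :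
  0 <= x <= 1 -> 1 - n%:R * x <= (1 - x) ^+ n.
Proof.
move=> /andP[x0 x1]; elim: n => [|n IH]; first by rewrite mul0r subr0 expr0.
have n0 : (0 : R) <= n%:R by rewrite ler0n.
have p0 : 0 <= (1 - x) ^+ n by rewrite exprn_ge0 // subr_ge0.
rewrite exprS -addn1 natrD; nra.
Qed.

Lemma mul_le_staircase (R : realDomainType) (rho x y : R) K :
  0 <= rho -> 0 <= x <= 1 -> 0 <= y <= 1 ->
  (forall t, (t < K)%N -> x <= rho ^+ (K - t) \/ y <= rho ^+ t.+1) ->
  x * y <= rho ^+ K.
Proof.
move=> rho0 /andP[x0 x1] /andP[y0 y1] hstair.
suff : forall t, (t <= K)%N -> x * y <= rho ^+ K \/ y <= rho ^+ t.
  by case/(_ K (leqnn K)) => // yK; nra.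
elim=> [|t IH] ht; first by right; rewrite expr0.
case: (IH (ltnW ht)) => [|yt]; first by left.
case: (hstair t ht) => [xt|]; last by right.
left; rewrite -(subnK (ltnW ht)) exprD.
by apply: ler_pM.
Qed.

Lemma exists_near_one_pow (R : realFieldType) (k M : nat) : (0 < k)%N ->
  exists rho : R, [/\ 0 < rho, rho < 1, 1 - k%:R^-1 <= rho ^+ M & 2^-1 <= rho ^+ M].
Proof.
move=> k0; pose h : R := (k.*2)%:R^-1; pose eps := h / M.+1%:R.
have kinv : 0 < (k%:R^-1 : R) <= 1 by rewrite invr_gt0 ltr0n k0 invf_le1 ?ler1n ?ltr0n.
have hk : h = 2^-1 * k%:R^-1 by rewrite /h -muln2 natrM invfM mulrC.
have h0 : 0 < h by rewrite invr_gt0 ltr0n double_gt0.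
have Meps : M%:R * eps <= h.
  by rewrite /eps mulrCA ler_piMr ?ler_pdivrMr ?mul1r ?ler_nat ?ltr0n // ltW.
have eps_h : 0 < eps <= h.
  by rewrite divr_gt0 ?ltr0n //= ler_piMr ?(ltW h0) // invf_le1 ?ler1n ?ltr0n.
have h_le : h <= k%:R^-1 /\ h <= 2^-1 by rewrite hk; lra.
have eps_unit : 0 <= eps <= 1 by lra.
exists (1 - eps); split; [lra | lra | |];
  by apply: le_trans (bernoulli_sub _ eps_unit); lra.
Qed.

Section Boxes.
Variables (R : realType) (d n : nat).
Implicit Types (q x : 'I_d -> R) (P : 'I_n -> 'I_d -> R) (X : {set 'I_n}).

Definition local_disc P X q : R :=
  `|#|[set i in X | in_box (P i) q]|%:R / #|X|%:R - box_vol q|.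

Lemma box_vol_unit q : in_unit_cube q -> 0 <= box_vol q <= 1.
Proof.
move=> hq; apply/andP; split; last by apply: prodr_ile1 => i _; apply: hq.
by apply: prodr_ge0 => i _; case/andP: (hq i).
Qed.

Lemma box_vol_le_coord q c : in_unit_cube q -> box_vol q <= q c.
Proof.
move=> hq; rewrite /box_vol (bigD1 c) //= ler_piMr //; first by case/andP: (hq c).
by apply: prodr_ile1 => i _; apply: hq.
Qed.

Lemma box_vol_le_coord2 q c c' : c != c' -> in_unit_cube q -> box_vol q <= q c * q c'.
Proof.
move=> cc' hq; rewrite /box_vol (bigD1 c) // (bigD1 c') 1?eq_sym //= mulrA ler_piMr //.
- by rewrite mulr_ge0 //; [case/andP: (hq c) | case/andP: (hq c')].
- by apply: prodr_ile1 => i _; apply: hq.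
Qed.

Lemma in_boxPn x q : in_unit_cube x -> ~~ in_box x q -> exists c, q c <= x c.
Proof.
move=> hx; rewrite /in_box negb_forall => /existsP[c].
by case/andP: (hx c) => -> _; rewrite -leNgt; exists c.
Qed.

Lemma frac_card_unit P X q :
  0 <= (#|[set i in X | in_box (P i) q]|%:R / #|X|%:R : R) <= 1.
Proof.
apply/andP; split; first by rewrite divr_ge0.
have : (#|[set i in X | in_box (P i) q]| <= #|X|)%N.
  by apply/subset_leq_card/subsetP => i; rewrite inE => /andP[].
case: #|X| => [|m] hm; first by rewrite invr0 mulr0.
by rewrite ler_pdivrMr ?ltr0Sn // mul1r ler_nat.
Qed.

Lemma local_disc_le1 P X q : in_unit_cube q -> local_disc P X q <= 1.
Proof.
move=> /box_vol_unit hv; have := frac_card_unit P X q.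
by rewrite /local_disc ler_norml; lra.
Qed.

Lemma local_disc_le_star_disc P X q :
  in_unit_cube q -> local_disc P X q <= star_disc P X.
Proof.
move=> hq; apply: ub_le_sup; last by exists q.
by exists 1 => _ [q' [hq' ->]]; apply: local_disc_le1.
Qed.

Lemma star_disc_le P X b :
  (forall q, in_unit_cube q -> local_disc P X q <= b) -> star_disc P X <= b.
Proof.
move=> hb; apply: ge_sup => [|_ [q [hq ->]]]; last exact: hb.
by exists (local_disc P X (fun=> 1)), (fun=> 1); split => // i; rewrite ler01 lexx.
Qed.

Lemma local_disc_empty P X q : in_unit_cube q ->
  (forall i, i \in X -> ~~ in_box (P i) q) -> local_disc P X q = box_vol q.
Proof.
move=> /box_vol_unit/andP[v0 _] hX; rewrite /local_disc.
have -> : [set i in X | in_box (P i) q] = set0.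
  by apply/setP => i; rewrite !inE; apply/andP => -[/hX/negP].
by rewrite cards0 mul0r sub0r normrN ger0_norm.
Qed.

(* A box containing a point has at least the fraction 1/#|X| of the points. *)
Lemma local_disc_nonempty P X q i b : in_unit_cube q -> i \in X -> in_box (P i) q ->
  1 - box_vol q <= b -> 1 - #|X|%:R^-1 <= b -> local_disc P X q <= b.
Proof.
move=> /box_vol_unit hv iX iq; have := frac_card_unit P X q.
have X0 : (0 : R) < #|X|%:R by rewrite ltr0n; apply/card_gt0P; exists i.
have : #|X|%:R^-1 <= (#|[set i in X | in_box (P i) q]|%:R / #|X|%:R : R).
  rewrite -[leLHS]mul1r ler_pM2r ?invr_gt0 // ler1n card_gt0; apply/set0Pn; exists i.
  by rewrite inE iX.
by rewrite /local_disc ler_norml; lra.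
Qed.
End Boxes.

Section Construction.
Variables (R : realType) (d' n N : nat) (rho : R).
Hypotheses (rho_gt0 : 0 < rho) (rho_lt1 : rho < 1).

Definition stair_pt (i : 'I_n) : 'I_d'.+2 -> R := fun c =>
  match nat_of_ord c with
  | 0 => rho ^+ xexp N i
  | 1 => rho ^+ yexp N i
  | _ => rho ^+ N.+1
  end.

Definition probe_box (g : nat) : 'I_d'.+2 -> R := fun c =>
  match nat_of_ord c with 0 => rho ^+ (N - g) | 1 => rho ^+ g | _ => 1 end.

Let c1 : 'I_d'.+2 := lift ord0 ord0.

Lemma stair_pt_unit i : in_unit_cube (stair_pt i).
Proof.
by move=> c; rewrite /stair_pt; case: (nat_of_ord c) => [|[|_]];
  rewrite exprn_ge0 ?exprn_ile1 ?ltW.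
Qed.

Lemma stair_pt_inj : injective stair_pt.
Proof.
have rho_inj := ieexprIn rho_gt0 (negbT (lt_eqF rho_lt1)).
move=> i i' e; have := congr1 (fun p => p ord0) e; have := congr1 (fun p => p c1) e.
by rewrite /stair_pt /= => /rho_inj ey /rho_inj ex; apply/val_inj; exact: exp_inj ex ey.
Qed.

Lemma probe_box_unit g : in_unit_cube (probe_box g).
Proof.
by move=> c; rewrite /probe_box; case: (nat_of_ord c) => [|[|_]];
  rewrite ?ler01 ?lexx // exprn_ge0 ?exprn_ile1 ?ltW.
Qed.

Lemma box_vol_probe_box g : (g <= N)%N -> box_vol (probe_box g) = rho ^+ N.
Proof.
move=> gN; rewrite /box_vol !big_ord_recl big1 ?mulr1 /= -?exprD ?subnK //.
Qed.

Lemma in_probe_box_index i g :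
  (g <= N)%N -> in_box (stair_pt i) (probe_box g) -> nat_of_ord i = g.
Proof.
move=> gN /forallP hb; have := hb ord0; have := hb c1.
rewrite /stair_pt /probe_box /= => /andP[_ h1] /andP[_ h0].
by rewrite !ltr_iXn2l // in h0 h1; exact: exp_probe gN h0 h1.
Qed.

Lemma stair_pt_ge_of_in_box i q c : in_unit_cube q -> in_box (stair_pt i) q ->
  rho ^+ N.+1 <= stair_pt i c.
Proof.
move=> hq /forallP hi.
have xexp_neq0 : xexp N i != 0%N.
  apply/eqP => ex; have /andP[_] := hi ord0; have /andP[_ q1] := hq ord0.
  by rewrite /stair_pt /= ex expr0 => /lt_le_trans/(_ q1); rewrite ltxx.
have rho_le e : (e <= N.+1)%N -> rho ^+ N.+1 <= rho ^+ e.
  by move=> eN; apply: ler_wiXn2l; rewrite ?ltW.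
by rewrite /stair_pt; case: (nat_of_ord c) => [|[|_]]; rewrite rho_le ?xexp_le ?yexp_le.
Qed.

Lemma box_vol_ge_of_in_box i q : in_unit_cube q -> in_box (stair_pt i) q ->
  rho ^+ (N.+1 * d'.+2) <= box_vol q.
Proof.
move=> hq hi; rewrite exprM -[X in _ ^+ X]card_ord -prodr_const.
apply: ler_prod => c _; rewrite exprn_ge0 ?(ltW rho_gt0) //=.
apply: le_trans (stair_pt_ge_of_in_box c hq hi) _.
by move/forallP: hi => /(_ c) /andP[_ /ltW].
Qed.

Lemma box_vol_le_staircase (X : {set 'I_n}) K q :
  (K <= N.+1)%N -> in_unit_cube q ->
  contains_staircase N X K -> (forall i, i \in X -> ~~ in_box (stair_pt i) q) ->
  box_vol q <= rho ^+ K.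
Proof.
move=> KN hq hstair hX.
have rhoK : rho ^+ N.+1 <= rho ^+ K by apply: ler_wiXn2l; rewrite ?ltW.
case: (boolP [exists c : 'I_d'.+2, (1 < c)%N && (q c <= rho ^+ K)]).
  by case/existsP => c /andP[_]; apply: le_trans (box_vol_le_coord c hq).
move/existsPn => hc; apply: le_trans (box_vol_le_coord2 (c := ord0) (c' := c1) isT hq) _.
apply: mul_le_staircase; [exact: ltW | exact: hq | exact: hq |].
move=> t tK; have [i iX [ex ey]] := hstair t tK.
have [c] := in_boxPn (stair_pt_unit i) (hX i iX).
move: (hc c); rewrite /stair_pt; case: c => -[|[|c]] hc' /=; rewrite ?ex ?ey.
- by move=> _ qc; left; rewrite (_ : ord0 = Ordinal hc') //; apply: val_inj.
- by move=> _ qc; right; rewrite (_ : c1 = Ordinal hc') //; apply: val_inj.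
- by move=> /negP qK qc; case: qK; apply: le_trans rhoK.
Qed.

Lemma star_disc_le_staircase (X : {set 'I_n}) K :
  (0 < #|X|)%N -> (K <= N.+1)%N ->
  1 - #|X|%:R^-1 <= rho ^+ (N.+1 * d'.+2) -> 2^-1 <= rho ^+ (N.+1 * d'.+2) ->
  contains_staircase N X K -> star_disc stair_pt X <= rho ^+ K.
Proof.
move=> X0 KN near half hstair; apply: star_disc_le => q hq.
have MK : rho ^+ (N.+1 * d'.+2) <= rho ^+ K.
  by apply: ler_wiXn2l; rewrite ?ltW // (leq_trans KN) ?leq_pmulr.
case: (boolP [exists i in X, in_box (stair_pt i) q]).
  case/exists_inP => i iX iq; apply: (local_disc_nonempty hq iX iq); last lra.
  by have := box_vol_ge_of_in_box hq iq; lra.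
move/exists_inPn => hX; rewrite local_disc_empty //.
exact: box_vol_le_staircase KN hq hstair hX.
Qed.

Lemma star_disc_ge_of_notin (X : {set 'I_n}) g :
  g \in [set i : 'I_n | (i <= N)%N] -> g \notin X -> rho ^+ N <= star_disc stair_pt X.
Proof.
rewrite inE => gN gX; apply: le_trans (local_disc_le_star_disc _ X (probe_box_unit g)).
rewrite local_disc_empty ?box_vol_probe_box //; first exact: probe_box_unit.
move=> i iX; apply: contraNN gX => /(in_probe_box_index gN) ig.
by rewrite (_ : g = i) //; apply: val_inj.
Qed.
End Construction.

Theorem proposition1 (R : realType) (d n k j : nat) :
  (2 <= d)%N -> (0 < n)%N -> (0 < k)%N -> (0 < j)%N -> (k <= n)%N ->
  (((2 * k <= n)%N /\ (j < k)%N) \/ ((n < 2 * k)%N /\ (j < n - k)%N)) ->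
  exists (P : 'I_n -> 'I_d -> R) (S : {set 'I_n}),
    [/\ injective P, (forall i, in_unit_cube (P i)), #|S| = k,
        local_min_SDSSP j P S &
        ~ global_min_SDSSP k P S].
Proof.
move=> d2 n0 k0 j0 kn hcase; case: d d2 => [|[|d']] // _.
pose N := (minn k (n - k) - 1)%N.
have [jN Nk Nkn] : [/\ j <= N, N < k & N.+1 + k <= n]%N by rewrite /N; split; lia.
have [rho [rho0 rho1 near half]] := exists_near_one_pow R (N.+1 * d'.+2) k0.
pose P : 'I_n -> 'I_d'.+2 -> R := stair_pt N rho.
pose good := [set i : 'I_n | (i <= N)%N].
pose S := [set i : 'I_n | (N.+1 <= i < N.+1 + k)%N].
pose T := [set i : 'I_n | (i < k)%N].
have cardS : #|S| = k by rewrite card_ord_range // addKn.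
have cardT : #|T| = k by rewrite card_ord_lt.
have good_S : [disjoint good & S].
  by rewrite disjoint_subset; apply/subsetP => i; rewrite !inE; lia.
have discS : star_disc P S = rho ^+ N.
  apply/le_anti/andP; split.
    apply: (star_disc_le_staircase rho0 rho1); rewrite ?cardS //.
    by apply: contains_staircase_bad; [lia | apply/subsetP => i; rewrite !inE; lia].
  by apply: (star_disc_ge_of_notin _ rho0 rho1 (g := Ordinal n0)); rewrite inE.
have discT : star_disc P T < rho ^+ N.
  apply: le_lt_trans (_ : rho ^+ N.+1 < _); last by rewrite ltr_iXn2l.
  apply: (star_disc_le_staircase rho0 rho1); rewrite ?cardT //.
  by apply: contains_staircase_good; [lia | apply/subsetP => i; rewrite !inE; lia].
exists P, S; split => //.
- exact: stair_pt_inj.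
- exact: stair_pt_unit.
- move=> S' swap; apply/negP; rewrite -leNgt discS.
  have [|g gG gS'] := j_swap_avoids good_S _ swap.
    by rewrite [#|good|](card_ord_lt (n := n) (b := N.+1)); lia.
  exact: (star_disc_ge_of_notin d' rho0 rho1 gG gS').
- by move=> /(_ T cardT); rewrite discS leNgt discT.
Qed.
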